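(* (1) For every $\mathtt{dCBN}$ term $M$: $\mathrm{nf}(\mathcal T^n(M))=\emptyset$ if and only if $\mathrm{nf}(\mathcal T(M^n))=\emptyset$. (2) For every $\mathtt{dCBV}$ term $M$: $\mathrm{nf}(\mathcal T^v(M))=\emptyset$ if and only if $\mathrm{nf}(\mathcal T(M^v))=\emptyset$.
   Context: \textbf{Translations.} $\mathtt{dBang}$ terms: $M ::= x\mid\lambda x.M\mid MN\mid M[N/x]\mid\ !M\mid\mathrm{der}\,M$. $\mathtt{dCBN}$/$\mathtt{dCBV}$ terms: $M::=x\mid\lambda x.M\mid MN\mid M[N/x]$; values $V::=x\mid\lambda x.M$; list contexts $L::=\square\mid L[N/x]$. $x^n=x$, $(\lambda x.M)^n=\lambda x.M^n$, $(MN)^n=M^n\,!N^n$, $(M[N/x])^n=M^n[!N^n/x]$. $x^v=!x$, $(\lambda x.M)^v=!(\lambda x.M^v)$, $(MN)^v=L\langle P\rangle N^v$ if $M^v=L\langle !P\rangle$, else $\mathrm{der}(M^v)\,N^v$; $(M[N/x])^v=M^v[N^v/x]$. \textbf{Resource calculus.} Resource terms $m,n::=x\mid\lambda x.m\mid mn\mid m[n/x]\mid\mathrm{der}\,m\mid[m_1,\dots,m_k]$; $l::=\square\mid l[n/x]$. Reduction (to a resource term or zero $\emptyset$), closed under all contexts: $\mathrm{der}(l\langle[m]\rangle)\to l\langle m\rangle$; $\mathrm{der}(l\langle[m_1,\dots,m_k]\rangle)\to\emptyset$ if $k\ne1$; $l\langle\lambda x.m\rangle n\to l\langle m[n/x]\rangle$;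 $m[l\langle[n_1,\dots,n_k]\rangle/x]\to l\langle m\{n_{\sigma(1)}/x_1,\dots,n_{\sigma(k)}/x_k\}\rangle$ for each permutation $\sigma$ when $x_1,\dots,x_k$ are exactly the free occurrences of $x$ in $m$, else $\to\emptyset$. For a set $X$ of resource terms, $\mathrm{nf}(X)$ is the set of normal resource terms $p$ with $m\to^*p$ for some $m\in X$. \textbf{Taylor expansions.} dBang: $x\sqsubset x$; $\lambda x.m\sqsubset\lambda x.M$; $mn\sqsubset MN$; $m[n/x]\sqsubset M[N/x]$; $\mathrm{der}\,m\sqsubset\mathrm{der}\,M$ (componentwise); $[m_1,\dots,m_k]\sqsubset\ !M$ if all $m_i\sqsubset M$; $\mathcal T(M)=\{m\mid m\sqsubset M\}$. dCBN: $x\sqsubset_n x$; $\lambda x.m\sqsubset_n\lambda x.M$ if $m\sqsubset_n M$; $m[n_1,\dots,n_k]\sqsubset_n MN$ and $m[[n_1,\dots,n_k]/x]\sqsubset_n M[N/x]$ if $m\sqsubset_n M$, all $n_i\sqsubset_n N$; $\mathcal T^n(M)=\{m\mid m\sqsubset_n M\}$. dCBV: $[x,\dots,x]\sqsubset_v x$; $[\lambda x.m_1,\dots,\lambda x.m_k]\sqsubset_v\lambda x.M$ if all $m_i\sqsubset_v M$; $\mathrm{der}(m)\,n\sqsubset_v MN$ if $m\sqsubset_v M$, $n\sqsubset_v N$ and $M$ is not of the form $L\langle V\rangle$; $l\langle m\rangle n\sqsubset_v L\langle V\rangle N$ if $[m]\sqsubset_v V$, $n\sqsubset_v N$ and $l=\square[p_1/y_1]\cdots[p_j/y_j]$,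 $L=\square[P_1/y_1]\cdots[P_j/y_j]$, $p_i\sqsubset_v P_i$; $m[n/x]\sqsubset_v M[N/x]$ if $m\sqsubset_v M,n\sqsubset_v N$; $\mathcal T^v(M)=\{m\mid m\sqsubset_v M\}$. *)

(* Terms use de Bruijn indices (index 0 = innermost binder).
   Binders: lambda binds its body; explicit substitution M[N/x] is
   written ES M N and binds index 0 in M (N is outside the binder). *)
From Stdlib Require Import List Arith Permutation Relations.
Import ListNotations.

Inductive bterm : Type :=
| BVar : nat -> bterm
| BLam : bterm -> bterm
| BApp : bterm -> bterm -> bterm
| BES  : bterm -> bterm -> bterm
| BBang : bterm -> bterm
| BDer : bterm -> bterm.

Inductive lterm : Type :=
| LVar : nat -> lterm
| LLam : lterm -> lterm
| LApp : lterm -> lterm -> lterm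
| LES  : lterm -> lterm -> lterm.

Definition is_value (M : lterm) : Prop :=
  match M with LVar _ | LLam _ => True | _ => False end.

(* list contexts: L = box[P1/y1]...[Pj/yj], the list [P1;...;Pj] *)
Definition lplug (t : lterm) (L : list lterm) : lterm :=
  fold_left (fun acc p => LES acc p) L t.

Definition bplug (t : bterm) (L : list bterm) : bterm :=
  fold_left (fun acc p => BES acc p) L t.

Fixpoint transN (M : lterm) : bterm :=
  match M with
  | LVar x => BVar x
  | LLam M => BLam (transN M)
  | LApp M N => BApp (transN M) (BBang (transN N))
  | LES M N => BES (transN M) (BBang (transN N))
  end.

Fixpoint split_bang (t : bterm) : option (list bterm * bterm) :=
  match t with
  | BBang P => Some ([], P)
  | BES t' q =>
      match split_bang t' with
      | Some (L, P) => Some (L ++ [q], P)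
      | None => None
      end
  | _ => None
  end.

Fixpoint transV (M : lterm) : bterm :=
  match M with
  | LVar x => BBang (BVar x)
  | LLam M => BBang (BLam (transV M))
  | LApp M N =>
      let mv := transV M in
      match split_bang mv with
      | Some (L, P) => BApp (bplug P L) (transV N)
      | None => BApp (BDer mv) (transV N)
      end
  | LES M N => BES (transV M) (transV N)
  end.

Inductive rterm : Type :=
| RVar : nat -> rterm
| RLam : rterm -> rterm
| RApp : rterm -> rterm -> rterm
| RES  : rterm -> rterm -> rterm      (* m[n/x], binds index 0 in m *)
| RDer : rterm -> rterm
| RBag : list rterm -> rterm.

Definition rplug (t : rterm) (l : list rterm) : rterm :=
  fold_left (fun acc p => RES acc p) l t.

Fixpoint rlift (c k : nat) (t : rterm) : rterm :=
  match t with
  | RVar i => if i <? c then RVar i else RVar (i + k)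
  | RLam m => RLam (rlift (S c) k m)
  | RApp m n => RApp (rlift c k m) (rlift c k n)
  | RES m n => RES (rlift (S c) k m) (rlift c k n)
  | RDer m => RDer (rlift c k m)
  | RBag ms => RBag (map (rlift c k) ms)
  end.

Fixpoint occ (d : nat) (t : rterm) : nat :=
  match t with
  | RVar i => if i =? d then 1 else 0
  | RLam m => occ (S d) m
  | RApp m n => occ d m + occ d n
  | RES m n => occ (S d) m + occ d n
  | RDer m => occ d m
  | RBag ms => list_sum (map (occ d) ms)
  end.

(* Linear substitution.  m lives in context G,x (x = index 0 at depth d);
   the terms ns live in context G,l where l consists of j binders.
   The successive free occurrences of x (left to right) are replaced by the
   successive elements of ns; the result lives in context G,l.
   Returns the resulting term and the unused elements of ns. *)
Fixpoint lsub (d j : nat) (t : rterm) (ns : list rterm) : rterm * list rterm :=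
  match t with
  | RVar i =>
      if i <? d then (RVar i, ns)
      else if i =? d then
        match ns with
        | n :: ns' => (rlift 0 d n, ns')
        | [] => (RVar i, [])
        end
      else (RVar (i - 1 + j), ns)
  | RLam m => let (m', r) := lsub (S d) j m ns in (RLam m', r)
  | RApp m n =>
      let (m', r1) := lsub d j m ns in
      let (n', r2) := lsub d j n r1 in (RApp m' n', r2)
  | RES m n =>
      let (m', r1) := lsub (S d) j m ns in
      let (n', r2) := lsub d j n r1 in (RES m' n', r2)
  | RDer m => let (m', r) := lsub d j m ns in (RDer m', r)
  | RBag ms =>
      let fix go (ms : list rterm) (ns : list rterm) : list rterm * list rterm :=
        match ms with
        | [] => ([], ns)
        | m :: ms' =>
            let (m', r1) := lsub d j m ns in
            let (ms'', r2) := go ms' r1 in (m' :: ms'', r2)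
        end in
      let (ms', r) := go ms ns in (RBag ms', r)
  end.

Definition linsubst (m : rterm) (j : nat) (ns : list rterm) : rterm :=
  fst (lsub 0 j m ns).

(* step m m'  : m -> m' (a resource term);  step0 m : m -> zero *)
Inductive step : rterm -> rterm -> Prop :=
| st_der : forall l m,
    step (RDer (rplug (RBag [m]) l)) (rplug m l)
| st_beta : forall l m n,
    step (RApp (rplug (RLam m) l) n)
         (rplug (RES m (rlift 0 (length l) n)) l)
| st_es : forall l m ns ns',
    occ 0 m = length ns -> Permutation ns ns' ->
    step (RES m (rplug (RBag ns) l)) (rplug (linsubst m (length l) ns') l)
| st_lam : forall m m', step m m' -> step (RLam m) (RLam m')
| st_appl : forall m m' n, step m m' -> step (RApp m n) (RApp m' n)
| st_appr : forall m n n', step n n' -> step (RApp m n) (RApp m n')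
| st_esl : forall m m' n, step m m' -> step (RES m n) (RES m' n)
| st_esr : forall m n n', step n n' -> step (RES m n) (RES m n')
| st_derc : forall m m', step m m' -> step (RDer m) (RDer m')
| st_bag : forall ms1 m m' ms2, step m m' ->
    step (RBag (ms1 ++ m :: ms2)) (RBag (ms1 ++ m' :: ms2)).

Inductive step0 : rterm -> Prop :=
| st0_der : forall l ms, length ms <> 1 -> step0 (RDer (rplug (RBag ms) l))
| st0_es : forall l m ns, occ 0 m <> length ns ->
    step0 (RES m (rplug (RBag ns) l))
| st0_lam : forall m, step0 m -> step0 (RLam m)
| st0_appl : forall m n, step0 m -> step0 (RApp m n)
| st0_appr : forall m n, step0 n -> step0 (RApp m n)
| st0_esl : forall m n, step0 m -> step0 (RES m n)
| st0_esr : forall m n, step0 n -> step0 (RES m n)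
| st0_derc : forall m, step0 m -> step0 (RDer m)
| st0_bag : forall ms1 m ms2, step0 m -> step0 (RBag (ms1 ++ m :: ms2)).

Definition reds : rterm -> rterm -> Prop := clos_refl_trans rterm step.

Definition rnormal (p : rterm) : Prop := (forall q, ~ step p q) /\ ~ step0 p.

Definition nf (X : rterm -> Prop) (p : rterm) : Prop :=
  rnormal p /\ exists m, X m /\ reds m p.

Definition nf_empty (X : rterm -> Prop) : Prop := forall p, ~ nf X p.

Inductive tayB : rterm -> bterm -> Prop :=
| tB_var : forall x, tayB (RVar x) (BVar x)
| tB_lam : forall m M, tayB m M -> tayB (RLam m) (BLam M)
| tB_app : forall m n M N, tayB m M -> tayB n N -> tayB (RApp m n) (BApp M N)
| tB_es : forall m n M N, tayB m M -> tayB n N -> tayB (RES m n) (BES M N)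
| tB_der : forall m M, tayB m M -> tayB (RDer m) (BDer M)
| tB_bang : forall ms M, Forall (fun m => tayB m M) ms -> tayB (RBag ms) (BBang M).

Inductive tayN : rterm -> lterm -> Prop :=
| tN_var : forall x, tayN (RVar x) (LVar x)
| tN_lam : forall m M, tayN m M -> tayN (RLam m) (LLam M)
| tN_app : forall m ns M N, tayN m M -> Forall (fun n => tayN n N) ns ->
    tayN (RApp m (RBag ns)) (LApp M N)
| tN_es : forall m ns M N, tayN m M -> Forall (fun n => tayN n N) ns ->
    tayN (RES m (RBag ns)) (LES M N).

Inductive tayV : rterm -> lterm -> Prop :=
| tV_var : forall x ms, Forall (fun m => m = RVar x) ms ->
    tayV (RBag ms) (LVar x)
| tV_lam : forall ms M,
    Forall (fun m => exists m', m = RLam m' /\ tayV m' M) ms ->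
    tayV (RBag ms) (LLam M)
| tV_der : forall m n M N, tayV m M -> tayV n N ->
    ~ (exists L V, is_value V /\ M = lplug V L) ->
    tayV (RApp (RDer m) n) (LApp M N)
| tV_app : forall m n ps V Ps N, is_value V ->
    tayV (RBag [m]) V -> tayV n N -> Forall2 tayV ps Ps ->
    tayV (RApp (rplug m ps) n) (LApp (lplug V Ps) N)
| tV_es : forall m n M N, tayV m M -> tayV n N -> tayV (RES m n) (LES M N).

Definition TB (M : bterm) : rterm -> Prop := fun m => tayB m M.
Definition TN (M : lterm) : rterm -> Prop := fun m => tayN m M.
Definition TV (M : lterm) : rterm -> Prop := fun m => tayV m M.

(** Both translations commute with Taylor expansion: [T^n(M)] and [T(M^n)] are
    the same set of resource terms, and so are [T^v(M)] and [T(M^v)], hence they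
    have the same normal forms.  For call-by-value the two clauses for an
    application [M N] in [T^v] follow exactly the case split of [(M N)^v] on
    whether [M^v] has the shape [L<!P>], i.e. on whether [M] is a value under a
    list context. *)

From Stdlib Require Import List Lia Wf_nat.
Import ListNotations.

Lemma nf_empty_ext (X Y : rterm -> Prop) :
  (forall m, X m <-> Y m) -> nf_empty X <-> nf_empty Y.
Proof.
  intros HXY; unfold nf_empty, nf.
  split; intros H p [Hp [m [Hm Hmp]]]; apply (H p); split; auto;
    exists m; split; auto; apply HXY; auto.
Qed.

Lemma Forall2_map_r_iff {A B C : Type} (R : A -> B -> Prop) (S : A -> C -> Prop)
    (f : B -> C) (xs : list A) (ys : list B) :
  (forall y, In y ys -> forall x, R x y <-> S x (f y)) ->
  Forall2 R xs ys <-> Forall2 S xs (map f ys).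
Proof.
  revert xs; induction ys as [|y ys IHys]; intros xs HRS; simpl.
  - split; intros H; inversion H; constructor.
  - assert (Hys : forall y', In y' ys -> forall x, R x y' <-> S x (f y'))
      by (intros; apply HRS; simpl; auto).
    split; intros H; inversion H; subst; constructor;
      solve [apply HRS; simpl; auto | apply IHys; auto].
Qed.

Lemma tayN_transN (M : lterm) (m : rterm) : tayN m M <-> tayB m (transN M).
Proof.
  revert m; induction M as [x|M IHM|M IHM N IHN|M IHM N IHN]; intros m; simpl;
    split; intros H; inversion H; subst.
  - constructor.
  - constructor.
  - constructor; apply IHM; assumption.
  - constructor; apply IHM; assumption.
  - constructor; [apply IHM; assumption|].
    constructor; eapply Forall_impl; [|eassumption]; intros n; apply IHN.
  - match goal with Hb : tayB _ (BBang _) |- _ => inversion Hb; subst end.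
    constructor; [apply IHM; assumption|].
    eapply Forall_impl; [|eassumption]; intros n; apply IHN.
  - constructor; [apply IHM; assumption|].
    constructor; eapply Forall_impl; [|eassumption]; intros n; apply IHN.
  - match goal with Hb : tayB _ (BBang _) |- _ => inversion Hb; subst end.
    constructor; [apply IHM; assumption|].
    eapply Forall_impl; [|eassumption]; intros n; apply IHN.
Qed.

Lemma lplug_snoc (V : lterm) (Ps : list lterm) (Q : lterm) :
  lplug V (Ps ++ [Q]) = LES (lplug V Ps) Q.
Proof. unfold lplug; rewrite fold_left_app; reflexivity. Qed.

Lemma lplug_value_inj (V V' : lterm) (Ps Ps' : list lterm) :
  is_value V -> is_value V' -> lplug V Ps = lplug V' Ps' -> V = V' /\ Ps = Ps'.
Proof.
  intros HV HV'; revert Ps'.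
  induction Ps as [|P Ps IHPs] using rev_ind;
    intros Ps'; destruct Ps' as [|P' Ps' _] using rev_ind;
    rewrite ?lplug_snoc; simpl; intros Heq; subst.
  - auto.
  - destruct V'; simpl in HV; tauto.
  - destruct V; simpl in HV'; tauto.
  - injection Heq as Heq ->.
    destruct (IHPs _ Heq) as [-> ->]; auto.
Qed.

Fixpoint lsize (M : lterm) : nat :=
  match M with
  | LVar _ => 1
  | LLam M => S (lsize M)
  | LApp M N | LES M N => S (lsize M + lsize N)
  end.

Lemma lsize_lplug (V : lterm) (Ps : list lterm) :
  lsize V <= lsize (lplug V Ps) /\
  forall P, In P Ps -> lsize P < lsize (lplug V Ps).
Proof.
  revert V; induction Ps as [|Q Ps IHPs]; intros V; simpl.
  - split; [lia | tauto].
  - change (fold_left (fun acc p => LES acc p) Ps (LES V Q)) with (lplug (LES V Q) Ps).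
    destruct (IHPs (LES V Q)) as [HV HPs]; simpl in HV.
    split; [lia|].
    intros P [<-|HP]; [lia | auto].
Qed.

Lemma tayB_bplug (P : bterm) (L : list bterm) (m : rterm) :
  tayB m (bplug P L) <->
  exists m0 ps, m = rplug m0 ps /\ tayB m0 P /\ Forall2 tayB ps L.
Proof.
  revert P m; induction L as [|Q L IHL]; intros P m; simpl.
  - split.
    + intros H; exists m, []; auto.
    + intros (m0 & ps & -> & Hm0 & Hps); inversion Hps; assumption.
  - change (fold_left (fun acc p => BES acc p) L (BES P Q)) with (bplug (BES P Q) L).
    rewrite IHL; split.
    + intros (m0 & ps & -> & Hm0 & Hps).
      inversion Hm0 as [| |? ? ? ? |m1 n ? ? Hm1 Hn| |]; subst.
      exists m1, (n :: ps); auto.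
    + intros (m0 & ps & -> & Hm0 & Hps).
      inversion Hps as [|n ? ps' ? Hn Hps']; subst.
      exists (RES m0 n), ps'; split; [reflexivity|]; split; [constructor|]; assumption.
Qed.

Lemma tayB_singleton_bang (m : rterm) (P : bterm) :
  tayB (RBag [m]) (BBang P) <-> tayB m P.
Proof.
  split; intros H.
  - inversion H; subst; match goal with F : Forall _ _ |- _ => inversion F end; assumption.
  - constructor; constructor; auto.
Qed.

Lemma split_bang_transV_lplug (V : lterm) (Ps : list lterm) :
  is_value V -> split_bang (transV (lplug V Ps)) <> None.
Proof.
  intros HV; induction Ps as [|Q Ps IHPs] using rev_ind.
  - destruct V; simpl in *; [discriminate | discriminate | tauto | tauto].
  - rewrite lplug_snoc; simpl.
    destruct (split_bang (transV (lplug V Ps))) as [[]|]; congruence.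
Qed.

Lemma split_bang_transV_some (M : lterm) (L : list bterm) (P : bterm) :
  split_bang (transV M) = Some (L, P) ->
  exists V Ps, is_value V /\ M = lplug V Ps /\ L = map transV Ps /\
               transV V = BBang P.
Proof.
  revert L P; induction M as [x|M _|M _ N _|M IHM N _]; intros L P; simpl.
  - intros [= <- <-]; exists (LVar x), []; simpl; auto.
  - intros [= <- <-]; exists (LLam M), []; simpl; auto.
  - destruct (split_bang (transV M)) as [[]|]; discriminate.
  - destruct (split_bang (transV M)) as [[L' P']|] eqn:E; [|discriminate].
    intros [= <- <-].
    destruct (IHM _ _ eq_refl) as (V & Ps & HV & -> & -> & HVP).
    exists V, (Ps ++ [N]); rewrite lplug_snoc, map_app; auto.
Qed.

Lemma tayV_app_lplug (V : lterm) (Ps : list lterm) (N : lterm) (m : rterm) :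
  is_value V ->
  tayV m (LApp (lplug V Ps) N) <->
  exists m0 ps n, m = RApp (rplug m0 ps) n /\
    tayV (RBag [m0]) V /\ Forall2 tayV ps Ps /\ tayV n N.
Proof.
  intros HV; split.
  - intros H; inversion H; subst.
    + exfalso; eauto.
    + match goal with Heq : lplug _ _ = lplug _ _ |- _ =>
        destruct (lplug_value_inj _ _ _ _ ltac:(eassumption) HV Heq) as [-> ->] end.
      exists m0, ps, n; auto.
  - intros (m0 & ps & n & -> & Hm0 & Hps & Hn); apply tV_app; assumption.
Qed.

Lemma tayV_app_der (M N : lterm) (m : rterm) :
  (forall V Ps, is_value V -> M <> lplug V Ps) ->
  tayV m (LApp M N) <->
  exists m' n, m = RApp (RDer m') n /\ tayV m' M /\ tayV n N.
Proof.
  intros HM; split.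
  - intros H; inversion H; subst.
    + exists m0, n; auto.
    + exfalso; eapply HM; eauto.
  - intros (m' & n & -> & Hm' & Hn); apply tV_der; auto.
    intros (L & V & HV & ->); eapply HM; eauto.
Qed.

Definition tayV_transV_agree (M : lterm) : Prop :=
  forall m, tayV m M <-> tayB m (transV M).

Lemma tayV_transV_app_lplug (V : lterm) (Ps : list lterm) (N : lterm) (P : bterm) :
  is_value V -> transV V = BBang P ->
  tayV_transV_agree V -> (forall Q, In Q Ps -> tayV_transV_agree Q) ->
  tayV_transV_agree N ->
  forall m, tayV m (LApp (lplug V Ps) N) <->
            tayB m (BApp (bplug P (map transV Ps)) (transV N)).
Proof.
  unfold tayV_transV_agree; intros HV HVP AV APs AN m.
  rewrite tayV_app_lplug by assumption.
  assert (Hm0 : forall m0, tayV (RBag [m0]) V <-> tayB m0 P)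
    by (intros m0; rewrite AV, HVP; apply tayB_singleton_bang).
  assert (Hps : forall ps, Forall2 tayV ps Ps <-> Forall2 tayB ps (map transV Ps))
    by (intros ps; apply Forall2_map_r_iff; auto).
  split.
  - intros (m0 & ps & n & -> & HVm0 & HPs & Hn).
    constructor; [apply tayB_bplug; exists m0, ps | apply AN; assumption].
    repeat split; [apply Hm0 | apply Hps]; assumption.
  - intros H; inversion H as [| |m1 n ? ? HL Hn| | |]; subst.
    apply tayB_bplug in HL as (m0 & ps & -> & HPm0 & HPs).
    exists m0, ps, n; rewrite Hm0, Hps, AN; auto.
Qed.

Lemma tayV_transV_app_der (M N : lterm) :
  (forall V Ps, is_value V -> M <> lplug V Ps) ->
  tayV_transV_agree M -> tayV_transV_agree N ->
  forall m, tayV m (LApp M N) <-> tayB m (BApp (BDer (transV M)) (transV N)).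
Proof.
  unfold tayV_transV_agree; intros HM AM AN m.
  rewrite tayV_app_der by assumption; split.
  - intros (m' & n & -> & Hm' & Hn).
    constructor; [constructor; apply AM | apply AN]; assumption.
  - intros H; inversion H as [| |d n ? ? HD Hn| | |]; subst.
    inversion HD as [| | | |m' ? Hm' |]; subst.
    exists m', n; rewrite AM, AN; auto.
Qed.

Lemma tayV_transV (M : lterm) : tayV_transV_agree M.
Proof.
  (* Induction on size rather than structure: an application [LApp (lplug V Ps) N]
     needs the hypothesis for [V] and for the members of [Ps], which are not
     immediate subterms. *)
  induction M as [M IH] using (induction_ltof1 _ lsize); unfold ltof in IH.
  destruct M as [x|B|A N|A N]; intros m; simpl in *.
  - split; intros H; inversion H; subst; constructor;
      eapply Forall_impl; try eassumption; simpl.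
    + intros a ->; constructor.
    + intros a Ha; inversion Ha; reflexivity.
  - split; intros H; inversion H; subst; constructor;
      eapply Forall_impl; try eassumption; simpl.
    + intros a (b & -> & Hb); constructor; apply IH; [lia | assumption].
    + intros a Ha; inversion Ha; subst; eexists; split; [reflexivity|].
      apply IH; [lia | assumption].
  - destruct (split_bang (transV A)) as [[L P]|] eqn:E.
    + destruct (split_bang_transV_some _ _ _ E) as (V & Ps & HV & -> & -> & HVP).
      destruct (lsize_lplug V Ps) as [HsV HsPs].
      apply tayV_transV_app_lplug; auto.
      * apply IH; lia.
      * intros Q HQ; apply IH; specialize (HsPs Q HQ); lia.
      * apply IH; lia.
    + apply tayV_transV_app_der; try (intros; apply IH; lia).
      intros V Ps HV ->; exact (split_bang_transV_lplug V Ps HV E).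
  - split; intros H; inversion H; subst; constructor; apply IH; auto; lia.
Qed.

Theorem mainTheorem10 :
  (forall M : lterm, nf_empty (TN M) <-> nf_empty (TB (transN M))) /\
  (forall M : lterm, nf_empty (TV M) <-> nf_empty (TB (transV M))).
Proof.
  split; intros M; apply nf_empty_ext.
  - apply tayN_transN.
  - apply tayV_transV.
Qed.
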